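(* Let $(\mathfrak g,[\cdot,\cdot,\cdot])$ be a Lie triple system, $(V;\rho)$ a representation of $\mathfrak g$, and $T:V\to\mathfrak g$ a linear map. Let $\Theta$ be the semidirect product bracket on $\mathfrak g\oplus V$ and $\Theta^T$ its twisting by $T$. Then $((\mathfrak g\oplus V,\Theta^T),\mathfrak g,V)$ is a twilled Lie triple system (i.e. $\mathfrak g$ and $V$ are subalgebras for $\Theta^T$) if and only if $T$ is a relative Rota–Baxter operator on $\mathfrak g$ with respect to $(V;\rho)$.
   Context: All vector spaces are over a field of characteristic $0$. A Lie triple system is a vector space with a trilinear bracket satisfying $[x,x,y]=0$, $[x,y,z]+[y,z,x]+[z,x,y]=0$ and $[x,y,[z,w,t]]=[[x,y,z],w,t]+[z,[x,y,w],t]+[z,w,[x,y,t]]$. A representation is a bilinear $\rho:\otimes^2\mathfrak g\to\mathfrak{gl}(V)$ with $D(x,y):=\rho(y,x)-\rho(x,y)$, satisfying $\rho(z,w)\rho(x,y)-\rho(y,w)\rho(x,z)-\rho(x,[y,z,w])+D(y,z)\rho(x,w)=0$ and $\rho([x,y,z],w)+\rho(z,[x,y,w])=[D(x,y),\rho(z,w)]$. The semidirect product bracket is $\Theta(x+u,y+v,z+w)=[x,y,z]+D(x,y)w+\rho(y,z)u-\rho(x,z)v$ ($x,y,z\in\mathfrak g$, $u,v,w\in V$), a Lie triple system on $\mathfrak g\oplus V$. A relative Rota–Baxter operator is a linear $T:V\to\mathfrak g$ with $[Tu,Tv,Tw]=T(D(Tu,Tv)w+\rho(Tv,Tw)u-\rho(Tu,Tw)v)$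 for all $u,v,w\in V$. Cochains and twisting: $C^p(\mathcal G,\mathcal G)=\mathrm{Hom}(\otimes^{2p+1}\mathcal G,\mathcal G)$, arguments $(\mathfrak X_1,\dots,\mathfrak X_p,x)$ with $\mathfrak X_i=x_i\otimes y_i$; for $P\in C^p,Q\in C^q$, $(P\circ Q)(\mathfrak X_1,\dots,\mathfrak X_{p+q},x)=\sum_{k=1}^p(-1)^{(k-1)q}\sum_{\sigma\in\mathbb S(k-1,q)}(-1)^\sigma P(\mathfrak X_{\sigma(1)},\dots,\mathfrak X_{\sigma(k-1)},Q(\mathfrak X_{\sigma(k)},\dots,\mathfrak X_{\sigma(k+q-1)},x_{k+q})\otimes y_{k+q},\mathfrak X_{k+q+1},\dots,x)+\sum_{k=1}^p(-1)^{(k-1)q}\sum_{\sigma\in\mathbb S(k-1,q)}(-1)^\sigma P(\mathfrak X_{\sigma(1)},\dots,\mathfrak X_{\sigma(k-1)},x_{k+q}\otimes Q(\mathfrak X_{\sigma(k)},\dots,\mathfrak X_{\sigma(k+q-1)},y_{k+q}),\mathfrak X_{k+q+1},\dots,x)+\sum_{\sigma\in\mathbb S(p,q)}(-1)^\sigma P(\mathfrak X_{\sigma(1)},\dots,\mathfrak X_{\sigma(p)},Q(\mathfrak X_{\sigma(p+1)},\dots,\mathfrak X_{\sigma(p+q)},x))$ and $[P,Q]_{\mathsf{LTS}}=P\circ Q-(-1)^{pq}Q\circ P$. With $\hat T\in C^0(\mathfrak g\oplus V,\mathfrak g\oplus V)$, $\hat T(x,u)=(Tu,0)$, and $X_{\hat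 T}(\cdot)=[\cdot,\hat T]_{\mathsf{LTS}}$, the twisting is $\Theta^T=\sum_{k\ge0}\frac1{k!}X_{\hat T}^k(\Theta)$ (finite sum). *)

From HB Require Import structures.
From mathcomp Require Import all_boot all_order all_algebra.
Set Implicit Arguments. Unset Strict Implicit. Unset Printing Implicit Defensive.
Import GRing.Theory.
Local Open Scope ring_scope.

Section LTS.
Variable K : fieldType.

Definition lin (U W : lmodType K) (f : U -> W) : Prop :=
  forall (a : K) (u v : U), f (a *: u + v) = a *: f u + f v.

Section Defs.
Variables (g V : lmodType K).
Variable br : g -> g -> g -> g.
Variable rho : g -> g -> V -> V.

Definition trilinear : Prop :=
  (forall y z, lin (fun x => br x y z)) /\
  (forall x z, lin (fun y => br x y z)) /\
  (forall x y, lin (fun z => br x y z)).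

Definition LTS : Prop :=
  [/\ trilinear,
      (forall x y, br x x y = 0),
      (forall x y z, br x y z + br y z x + br z x y = 0) &
      (forall x y z w t,
          br x y (br z w t) =
          br (br x y z) w t + br z (br x y w) t + br z w (br x y t))].

Definition Dop (x y : g) : V -> V := fun v => rho y x v - rho x y v.

Definition is_rep : Prop :=
  [/\ (forall y v, lin (fun x => rho x y v)),
      (forall x v, lin (fun y => rho x y v)),
      (forall x y, lin (rho x y)),
      (forall x y z w v,
          rho z w (rho x y v) - rho y w (rho x z v) - rho x (br y z w) v
          + Dop y z (rho x w v) = 0) &
      (forall x y z w v,
          rho (br x y z) w v + rho z (br x y w) v =
          Dop x y (rho z w v) - rho z w (Dop x y v))].

(* semidirect product bracket on g (+) V, as a 1-cochain
   (a function of the argument list [:: a; b; c]) *)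
Definition semidirect (s : seq (g * V)) : g * V :=
  let a := nth 0 s 0 in let b := nth 0 s 1 in let c := nth 0 s 2 in
  (br a.1 b.1 c.1,
   Dop a.1 b.1 c.2 + rho b.1 c.1 a.2 - rho a.1 c.1 b.2).

Definition hatT (T : V -> g) (s : seq (g * V)) : g * V :=
  (T (nth 0 s 0).2, 0).

Definition relRB (T : V -> g) : Prop :=
  forall u v w : V,
    br (T u) (T v) (T w) =
    T (Dop (T u) (T v) w + rho (T v) (T w) u - rho (T u) (T w) v).

End Defs.

Section Cochains.
Variable G : lmodType K.

(* A p-cochain is represented as a function on argument lists
   [:: x_1; y_1; ...; x_p; y_p; x] (2p+1 arguments). *)
Definition cochain := seq G -> G.

Fixpoint bitseqs (n : nat) : seq bitseq :=
  if n is n'.+1 then [seq true :: b | b <- bitseqs n'] ++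
                     [seq false :: b | b <- bitseqs n']
  else [:: [::]].

(* (a,b)-shuffles of {0,...,a+b-1}, each given as the list
   [:: sigma(0); ...; sigma(a+b-1)] *)
Definition shuffles (a b : nat) : seq (seq nat) :=
  [seq mask m (iota 0 (a + b)) ++ mask (map negb m) (iota 0 (a + b))
  | m <- bitseqs (a + b) & count id m == a].

(* number of inversions; the sign of sigma is (-1)^inv_count sigma *)
Fixpoint inv_count (l : seq nat) : nat :=
  if l is h :: t then count (fun x => x < h)%N t + inv_count t else 0%N.

Definition sgn (n : nat) : K := (-1) ^+ n.

Definition flat (ps : seq (G * G)) : seq G :=
  flatten [seq [:: pr.1; pr.2] | pr <- ps].

Definition circ (p q : nat) (P Q : cochain) : cochain := fun s =>
  let X i := (nth 0 s (2 * i), nth 0 s (2 * i + 1)) in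
  let xl := nth 0 s (2 * (p + q)) in
  let rest k := [seq X i | i <- iota (k + q).+1 (p + q - (k + q).+1)] in
  \sum_(k < p) \sum_(sg <- shuffles k q)
     (sgn (k * q + inv_count sg) *:
        P (flat (take k [seq X i | i <- sg])
           ++ flat [:: (Q (flat (drop k [seq X i | i <- sg])
                            ++ [:: (X (k + q)%N).1]), (X (k + q)%N).2)]
           ++ flat (rest k) ++ [:: xl]))
  + \sum_(k < p) \sum_(sg <- shuffles k q)
     (sgn (k * q + inv_count sg) *:
        P (flat (take k [seq X i | i <- sg])
           ++ flat [:: ((X (k + q)%N).1,
                        Q (flat (drop k [seq X i | i <- sg])
                            ++ [:: (X (k + q)%N).2]))]
           ++ flat (rest k) ++ [:: xl]))
  + \sum_(sg <- shuffles p q)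
     (sgn (inv_count sg) *:
        P (flat (take p [seq X i | i <- sg])
           ++ [:: Q (flat (drop p [seq X i | i <- sg]) ++ [:: xl])])).

Definition LTSbr (p q : nat) (P Q : cochain) : cochain := fun s =>
  circ p q P Q s - sgn (p * q) *: circ q p Q P s.

Definition Xop (p : nat) (That : cochain) (P : cochain) : cochain :=
  LTSbr p 0 P That.

(* twisting  P^T = sum_k 1/k! X_That^k (P), for P in C^p.
   X_That^k P = 0 for k > 2p+2 (That has image in g and kills g),
   so the finite sum over k < 2p+3 is the full sum. *)
Definition twist (p : nat) (That : cochain) (P : cochain) : cochain := fun s =>
  \sum_(k < (2 * p + 3)%N) ((k`!)%:R)^-1 *: iter k (Xop p That) P s.

End Cochains.

Definition twilled (g V : lmodType K) (Th : seq (g * V) -> g * V) : Prop :=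
  (forall x y z : g, (Th [:: (x, 0); (y, 0); (z, 0)]).2 = 0) /\
  (forall u v w : V, (Th [:: (0, u); (0, v); (0, w)]).1 = 0).

End LTS.

From HB Require Import structures.
From mathcomp Require Import all_boot all_order all_algebra ssrAC.

Set Implicit Arguments.
Unset Strict Implicit.
Unset Printing Implicit Defensive.

Local Open Scope ring_scope.
Import GRing.Theory.

(* The operator X_h = [., h]_LTS, with h := \hat T, inserts h into one slot of
   a ternary cochain and subtracts h applied to its value.  As h^2 = 0, the
   power X_h^k P inserts h into k distinct slots, and
     X_h^k P = k! (P_k - h P_(k-1)),
   where P_k collects the terms of P(a + h a, b + h b, c + h c) carrying h in
   exactly k slots.  Summing the exponential series therefore gives
     Theta^T (a, b, c) = (1 - h) Theta (a + h a, b + h b, c + h c),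
   i.e. twisting is conjugation by e^h = 1 + h.  Since h vanishes on g,
   Theta^T agrees with Theta on g; on V we have e^h u = (T u, u), so the
   g-component of Theta^T (u, v, w) is the Rota-Baxter defect
   [Tu, Tv, Tw] - T (D(Tu, Tv) w + rho(Tv, Tw) u - rho(Tu, Tw) v). *)

Lemma lin_add (K : fieldType) (U W : lmodType K) (f : U -> W) :
  lin f -> {morph f : u v / u + v}.
Proof. by move=> f_lin u v; rewrite -[u]scale1r f_lin !scale1r. Qed.

Lemma lin0 (K : fieldType) (U W : lmodType K) (f : U -> W) : lin f -> f 0 = 0.
Proof. by move=> f_lin; rewrite -(subrr (0 : U)) (zmod_morphism_linear f_lin) subrr. Qed.

Section Twisting.
Variables (K : fieldType) (G : lmodType K).

Lemma Xop1_cons3 (That P : cochain G) a b c :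
  Xop 1 That P [:: a; b; c] =
  P [:: That [:: a]; b; c] + P [:: a; That [:: b]; c] + P [:: a; b; That [:: c]]
  - That [:: P [:: a; b; c]].
Proof.
rewrite /Xop /LTSbr /circ /= !big_ord1 /= /shuffles /= !big_cons !big_nil /=.
by rewrite /sgn /= !expr0 !scale1r !addr0 /= !big_ord0 !addr0 add0r.
Qed.

Variables (h : {additive G -> G}) (That P : cochain G).
Hypothesis ThatE : forall x, That [:: x] = h x.
Hypothesis hK : forall x, h (h x) = 0.
Hypothesis P_addl : forall a1 a2 b c,
  P [:: a1 + a2; b; c] = P [:: a1; b; c] + P [:: a2; b; c].
Hypothesis P_addm : forall a b1 b2 c,
  P [:: a; b1 + b2; c] = P [:: a; b1; c] + P [:: a; b2; c].
Hypothesis P_addr : forall a b c1 c2,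
  P [:: a; b; c1 + c2] = P [:: a; b; c1] + P [:: a; b; c2].

Lemma P0l b c : P [:: 0; b; c] = 0.
Proof. by apply: (addrI (P [:: 0; b; c])); rewrite -P_addl !addr0. Qed.
Lemma P0m a c : P [:: a; 0; c] = 0.
Proof. by apply: (addrI (P [:: a; 0; c])); rewrite -P_addm !addr0. Qed.
Lemma P0r a b : P [:: a; b; 0] = 0.
Proof. by apply: (addrI (P [:: a; b; 0])); rewrite -P_addr !addr0. Qed.

Definition hpart (k : nat) (a b c : G) : G :=
  match k with
  | 0 => P [:: a; b; c]
  | 1 => P [:: h a; b; c] + P [:: a; h b; c] + P [:: a; b; h c]
  | 2 => P [:: h a; h b; c] + P [:: h a; b; h c] + P [:: a; h b; h c]
  | 3 => P [:: h a; h b; h c]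
  | _ => 0
  end.

Lemma sum_hpart a b c :
  \sum_(k < 4) hpart k a b c = P [:: a + h a; b + h b; c + h c].
Proof.
rewrite !big_ord_recl big_ord0 addr0 /= P_addl !P_addm !P_addr !addrA.
by rewrite [RHS](ACl (1*5*3*2*7*6*4*8)).
Qed.

(* Inserting h into a slot that already carries h gives 0, since h^2 = 0;
   each term of hpart k.+1 arises from each of its k.+1 slots. *)
Lemma hpart_insert k a b c :
  hpart k (h a) b c + hpart k a (h b) c + hpart k a b (h c) = hpart k.+1 a b c *+ k.+1.
Proof.
case: k => [|[|[|[|k]]]] /=; rewrite ?hK ?P0l ?P0m ?P0r ?add0r ?addr0 ?mul0rn //.
- by rewrite mulr2n !addrA (ACl (1*2*4*3*5*6)).
- by rewrite !mulrS mulr0n addr0 addrA.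
Qed.

Lemma iter_Xop1_cons3 k a b c :
  iter k.+1 (Xop 1 That) P [:: a; b; c] =
  (hpart k.+1 a b c - h (hpart k a b c)) *+ k.+1`!.
Proof.
elim: k a b c => [|k IH] a b c; first by rewrite /= Xop1_cons3 !ThatE mulr1n.
rewrite iterS Xop1_cons3 !ThatE !IH [in RHS]factS [in RHS]mulrnA.
rewrite -!mulrnDl raddfMn raddfB hK subr0 -mulrnBl; congr (_ *+ _).
have sumB3 (x1 x2 x3 y1 y2 y3 : G) :
  (x1 - y1) + (x2 - y2) + (x3 - y3) = (x1 + x2 + x3) - (y1 + y2 + y3).
  by rewrite !opprD !addrA (ACl (1*3*5*2*4*6)).
by rewrite sumB3 -!raddfD !hpart_insert raddfMn -addrA -opprD -mulrSr -mulrnBl.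
Qed.

Hypothesis char0 : [pchar K] =i pred0.

Lemma twist1E a b c :
  twist 1 That P [:: a; b; c] =
  P [:: a + h a; b + h b; c + h c] - h (P [:: a + h a; b + h b; c + h c]).
Proof.
have fact_scaleK n (x : G) : (n`!)%:R^-1 *: (x *+ n`!) = x.
  rewrite -scaler_nat scalerA mulVf ?scale1r //.
  by move/pcharf0P: char0 => ->; rewrite -lt0n fact_gt0.
rewrite /twist big_ord_recl.
under eq_bigr => i _ do rewrite lift0 iter_Xop1_cons3 fact_scaleK.
rewrite sumrB -raddf_sum -sum_hpart addrA; congr (_ - _).
have -> : \sum_(k < 4) hpart k a b c = \sum_(k < 5) hpart k a b c.
  by rewrite [RHS]big_ord_recr /= addr0.
by rewrite [RHS]big_ord_recl /= invr1 scale1r.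
Qed.

End Twisting.

Section Semidirect.
Variables (K : fieldType) (g V : lmodType K).
Variables (br : g -> g -> g -> g) (rho : g -> g -> V -> V) (T : V -> g).
Hypothesis br_tri : trilinear br.
Hypothesis rho_linl : forall y v, lin (fun x => rho x y v).
Hypothesis rho_linm : forall x v, lin (fun y => rho x y v).
Hypothesis rho_linr : forall x y, lin (rho x y).
Hypothesis T_lin : lin T.

Lemma brDl x1 x2 y z : br (x1 + x2) y z = br x1 y z + br x2 y z.
Proof. by case: br_tri => linl _; exact: (lin_add (linl y z)). Qed.
Lemma brDm x y1 y2 z : br x (y1 + y2) z = br x y1 z + br x y2 z.
Proof. by case: br_tri => _ [linm _]; exact: (lin_add (linm x z)). Qed.
Lemma brDr x y z1 z2 : br x y (z1 + z2) = br x y z1 + br x y z2.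
Proof. by case: br_tri => _ [_ linr]; exact: (lin_add (linr x y)). Qed.
Lemma rhoDl x1 x2 y v : rho (x1 + x2) y v = rho x1 y v + rho x2 y v.
Proof. exact: (lin_add (rho_linl y v)). Qed.
Lemma rhoDm x y1 y2 v : rho x (y1 + y2) v = rho x y1 v + rho x y2 v.
Proof. exact: (lin_add (rho_linm x v)). Qed.
Lemma rhoDr x y v1 v2 : rho x y (v1 + v2) = rho x y v1 + rho x y v2.
Proof. exact: (lin_add (rho_linr x y)). Qed.

Lemma DopDl x1 x2 y v : Dop rho (x1 + x2) y v = Dop rho x1 y v + Dop rho x2 y v.
Proof. by rewrite /Dop rhoDl rhoDm opprD addrACA. Qed.
Lemma DopDm x y1 y2 v : Dop rho x (y1 + y2) v = Dop rho x y1 v + Dop rho x y2 v.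
Proof. by rewrite /Dop rhoDl rhoDm opprD addrACA. Qed.
Lemma DopDr x y v1 v2 : Dop rho x y (v1 + v2) = Dop rho x y v1 + Dop rho x y v2.
Proof. by rewrite /Dop !rhoDr opprD addrACA. Qed.

Let addrBACA (M : zmodType) (d1 d2 r1 r2 s1 s2 : M) :
  (d1 + d2) + (r1 + r2) - (s1 + s2) = (d1 + r1 - s1) + (d2 + r2 - s2).
Proof. by rewrite opprD !addrA (ACl (1*3*5*2*4*6)). Qed.

Lemma semidirect_addl a1 a2 b c :
  semidirect br rho [:: a1 + a2; b; c] =
  semidirect br rho [:: a1; b; c] + semidirect br rho [:: a2; b; c].
Proof. by congr (_, _); rewrite /= ?brDl // DopDl rhoDr rhoDl addrBACA. Qed.
Lemma semidirect_addm a b1 b2 c :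
  semidirect br rho [:: a; b1 + b2; c] =
  semidirect br rho [:: a; b1; c] + semidirect br rho [:: a; b2; c].
Proof. by congr (_, _); rewrite /= ?brDm // DopDm rhoDl rhoDr addrBACA. Qed.
Lemma semidirect_addr a b c1 c2 :
  semidirect br rho [:: a; b; c1 + c2] =
  semidirect br rho [:: a; b; c1] + semidirect br rho [:: a; b; c2].
Proof. by congr (_, _); rewrite /= ?brDr // DopDr !rhoDm addrBACA. Qed.

Definition hat (x : g * V) : g * V := (T x.2, 0).

Lemma hat_is_zmod_morphism : zmod_morphism hat.
Proof.
by move=> x y; congr (_, _); rewrite /= ?(zmod_morphism_linear T_lin) ?subr0.
Qed.
HB.instance Definition _ := GRing.isZmodMorphism.Build _ _ hat hat_is_zmod_morphism.

Lemma hatK x : hat (hat x) = 0.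
Proof. by congr (_, _); rewrite /= (lin0 T_lin). Qed.

Hypothesis char0 : [pchar K] =i pred0.

Lemma twist_semidirectE a b c :
  twist 1 (hatT T) (semidirect br rho) [:: a; b; c] =
  semidirect br rho [:: a + hat a; b + hat b; c + hat c]
  - hat (semidirect br rho [:: a + hat a; b + hat b; c + hat c]).
Proof.
exact: (twist1E (h := hat) (fun _ => erefl) hatK
  semidirect_addl semidirect_addm semidirect_addr char0).
Qed.

Lemma twist_semidirect_g x y z :
  twist 1 (hatT T) (semidirect br rho) [:: (x, 0); (y, 0); (z, 0)] = (br x y z, 0).
Proof.
have hat_g u : hat (u, 0) = 0 by rewrite /hat /= (lin0 T_lin).
rewrite twist_semidirectE !hat_g !addr0.
by congr (_, _); rewrite /= /Dop !(lin0 (rho_linr _ _)) !subr0 addr0 ?(lin0 T_lin) ?subr0.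
Qed.

Lemma twist_semidirect_V u v w :
  (twist 1 (hatT T) (semidirect br rho) [:: (0, u); (0, v); (0, w)]).1 =
  br (T u) (T v) (T w)
  - T (Dop rho (T u) (T v) w + rho (T v) (T w) u - rho (T u) (T w) v).
Proof. by rewrite twist_semidirectE /= !add0r !addr0. Qed.

End Semidirect.

Theorem proposition5p14 (K : fieldType) (g V : lmodType K)
  (br : g -> g -> g -> g) (rho : g -> g -> V -> V) (T : V -> g) :
  [pchar K] =i pred0 ->
  LTS br -> is_rep br rho -> lin T ->
  (twilled (twist 1 (hatT T) (semidirect br rho)) <-> relRB br rho T).
Proof.
move=> char0 [br_tri _ _ _] [rho_linl rho_linm rho_linr _ _] T_lin.
have twist_g := twist_semidirect_g br_tri rho_linl rho_linm rho_linr T_lin char0.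
have twist_V := twist_semidirect_V br_tri rho_linl rho_linm rho_linr T_lin char0.
split=> [[_ twilled_V] u v w | RB].
  by apply/eqP; rewrite -subr_eq0 -twist_V twilled_V.
by split=> [x y z | u v w]; rewrite ?twist_g // twist_V RB subrr.
Qed.
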